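(* Let $\mathsf{CS}$ be a constant specification for $\mathsf{LPC}^{int}$. For every set of formulas $T$ and formula $\phi$: if $T\models_{\mathsf{LPC}^{int}_{\mathsf{CS}}}\phi$, then $T\vdash_{\mathsf{LPC}^{int}_{\mathsf{CS}}}\phi$.
   Context: Language of $\mathsf{LPC}^{int}$: countable sets $\mathsf{Const}$, $\mathsf{Var}$, $\mathsf{Prop}$; terms and formulas defined by mutual recursion: $t ::= c \mid x \mid t\cdot t \mid t+t \mid\ !t \mid \langle t,\phi\rangle$ and $\phi ::= p \mid \neg\phi \mid \phi\wedge\phi \mid \phi\supset\phi \mid \phi>\phi \mid t{:}\phi$; $\mathsf{Tm},\mathsf{Fm}$ the sets of terms and formulas. Axiom schemes: (A1) all instances of classical tautologies; (A2) $(\phi>(\psi\supset\chi))\supset((\phi>\psi)\supset(\phi>\chi))$; (A3) $\phi>\phi$; (A4) $(\phi>\psi)\supset(\phi\supset\psi)$; (A5) $(s{:}(\phi>\psi)\wedge t{:}\phi) > (s\cdot t){:}\psi$; (A6) $s{:}\phi > (s+t){:}\phi$; (A7) $t{:}\phi>(s+t){:}\phi$; (A8) $t{:}\phi>\phi$; (A9) $t{:}\phi > (!t){:}t{:}\phi$; (A10) $t{:}\psi\supset\langle t,\phi\rangle{:}(\phi>\psi)$. A constant specification $\mathsf{CS}$ is a set of $c{:}\phi$ with $c\in\mathsf{Const}$, $\phi$ an instance of (A1)–(A10). $\mathsf{LPC}^{int}_{\mathsf{CS}}$: axioms (A1)–(A10) and $\mathsf{CS}$; rules (MP) from $\phi,\phi\supset\psi$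 infer $\psi$, and (RCN) from $\psi$ infer $\phi>\psi$. $T\vdash\phi$ iff $\vdash(\psi_1\wedge\cdots\wedge\psi_n)\supset\phi$ for some $\psi_1,\dots,\psi_n\in T$, $n\ge0$. Relational models $\mathcal M=(W,W_N,R_{Fm},R_{Tm},V)$: $W$ nonempty, $W_N\subseteq W$ nonempty (normal states); $R_\phi\subseteq W_N\times W_N$ for each formula; $R_t\subseteq W\times W$ for each term; $V(w)\subseteq\mathsf{Prop}$ for $w\in W_N$, $V(w)\subseteq\mathsf{Fm}$ for $w\in W\setminus W_N$. Truth: at non-normal $w$, $w\models\phi$ iff $\phi\in V(w)$; at normal $w$: $p$ iff $p\in V(w)$, $\neg,\wedge,\supset$ classical, $\phi>\psi$ iff $R_\phi(w)\subseteq[\psi]$, $t{:}\phi$ iff $R_t(w)\subseteq[\phi]$, with $[\phi]=\{w\in W:w\models\phi\}$. An $\mathsf{LPC}^{int}_{\mathsf{CS}}$-model is a relational model such that for all $w\in W_N$: (1) $R_\phi(w)\subseteq[\phi]$; (2) if $w\in[\phi]$ then $w\in R_\phi(w)$; (3) $R_c(w)\subseteq[\phi]$ for each $c{:}\phi\in\mathsf{CS}$; (4) $R_{s+t}(w)\subseteq R_s(w)\cap R_t(w)$; (5) for all $v\in R_{s\cdot t}(w)$, all $\phi,\psi$: if $w\in[s{:}(\phi>\psi)\wedge t{:}\phi]$ then $v\in[\psi]$; (6) $wR_tw$; (7) for $v,u\in W$, if $wR_{!t}v$ and $vR_tu$ then $wR_tu$; (8) for all $v\in W$, $\phi,\psi$,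 $t$: if $w\in[t{:}\psi]$ and $wR_{\langle t,\phi\rangle}v$ then $v\in[\phi>\psi]$. $T\models_{\mathsf{LPC}^{int}_{\mathsf{CS}}}\phi$ iff for every such model and every $w\in W_N$ at which all members of $T$ are true, $\phi$ is true at $w$. *)

From Stdlib Require Import List.
Import ListNotations.

(* Const, Var, Prop are countable: we take each to be nat. *)
Definition const := nat.
Definition var := nat.
Definition pvar := nat.

Inductive tm : Type :=
| TConst : const -> tm
| TVar : var -> tm
| TApp : tm -> tm -> tm
| TSum : tm -> tm -> tm
| TBang : tm -> tm
| TPair : tm -> fm -> tm
with fm : Type :=
| FAtom : pvar -> fm
| FNeg : fm -> fm
| FAnd : fm -> fm -> fm
| FImp : fm -> fm -> fm
| FCond : fm -> fm -> fm         (* phi > psi *)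
| FJust : tm -> fm -> fm.

(* Classical tautologies: formulas true under every boolean assignment to
   the propositionally atomic formulas (p, phi > psi, t : phi). *)
Fixpoint beval (v : fm -> bool) (f : fm) : bool :=
  match f with
  | FAtom _ => v f
  | FNeg a => negb (beval v a)
  | FAnd a b => andb (beval v a) (beval v b)
  | FImp a b => orb (negb (beval v a)) (beval v b)
  | FCond _ _ => v f
  | FJust _ _ => v f
  end.

Definition tautology (f : fm) : Prop := forall v, beval v f = true.

Inductive axiom : fm -> Prop :=
| A1 : forall f, tautology f -> axiom f
| A2 : forall a b c, axiom (FImp (FCond a (FImp b c)) (FImp (FCond a b) (FCond a c)))
| A3 : forall a, axiom (FCond a a)
| A4 : forall a b, axiom (FImp (FCond a b) (FImp a b))
| A5 : forall s t a b,
    axiom (FCond (FAnd (FJust s (FCond a b)) (FJust t a)) (FJust (TApp s t) b))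
| A6 : forall s t a, axiom (FCond (FJust s a) (FJust (TSum s t) a))
| A7 : forall s t a, axiom (FCond (FJust t a) (FJust (TSum s t) a))
| A8 : forall t a, axiom (FCond (FJust t a) a)
| A9 : forall t a, axiom (FCond (FJust t a) (FJust (TBang t) (FJust t a)))
| A10 : forall t a b, axiom (FImp (FJust t b) (FJust (TPair t a) (FCond a b))).

Definition constant_spec (CS : const -> fm -> Prop) : Prop :=
  forall c f, CS c f -> axiom f.

Inductive prov (CS : const -> fm -> Prop) : fm -> Prop :=
| PAx : forall f, axiom f -> prov CS f
| PCS : forall c f, CS c f -> prov CS (FJust (TConst c) f)
| PMP : forall f g, prov CS f -> prov CS (FImp f g) -> prov CS g
| PRCN : forall f g, prov CS g -> prov CS (FCond f g).

Fixpoint bigconj (f : fm) (l : list fm) : fm :=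
  match l with
  | [] => f
  | g :: l' => FAnd f (bigconj g l')
  end.

Definition deriv (CS : const -> fm -> Prop) (T : fm -> Prop) (f : fm) : Prop :=
  prov CS f \/
  exists g l, T g /\ (forall h, In h l -> T h) /\ prov CS (FImp (bigconj g l) f).

(* Relational models. V is split in two parts: Vp (for normal states, a set of
   propositional variables) and Vf (for non-normal states, a set of formulas). *)
Record model : Type := {
  W : Type;
  WN : W -> Prop;
  RF : fm -> W -> W -> Prop;
  RT : tm -> W -> W -> Prop;
  Vp : W -> pvar -> Prop;
  Vf : W -> fm -> Prop
}.

Fixpoint sat (M : model) (w : W M) (f : fm) : Prop :=
  (WN M w /\
    match f with
    | FAtom p => Vp M w p
    | FNeg a => ~ sat M w a
    | FAnd a b => sat M w a /\ sat M w b
    | FImp a b => sat M w a -> sat M w b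
    | FCond a b => forall v, RF M a w v -> sat M v b
    | FJust t a => forall v, RT M t w v -> sat M v a
    end)
  \/ (~ WN M w /\ Vf M w f).

Definition LPC_model (CS : const -> fm -> Prop) (M : model) : Prop :=
  (exists w : W M, WN M w) /\
  (forall f w v, RF M f w v -> WN M w /\ WN M v) /\
  (forall w, WN M w ->
    (forall f v, RF M f w v -> sat M v f) /\
    (forall f, sat M w f -> RF M f w w) /\
    (forall c f, CS c f -> forall v, RT M (TConst c) w v -> sat M v f) /\
    (forall s t v, RT M (TSum s t) w v -> RT M s w v /\ RT M t w v) /\
    (forall s t v, RT M (TApp s t) w v -> forall a b,
        sat M w (FAnd (FJust s (FCond a b)) (FJust t a)) -> sat M v b) /\
    (forall t, RT M t w w) /\
    (forall t v u, RT M (TBang t) w v -> RT M t v u -> RT M t w u) /\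
    (forall v a b t, sat M w (FJust t b) -> RT M (TPair t a) w v ->
        sat M v (FCond a b))).

Definition entails (CS : const -> fm -> Prop) (T : fm -> Prop) (f : fm) : Prop :=
  forall M : model, LPC_model CS M ->
    forall w : W M, WN M w -> (forall g, T g -> sat M w g) -> sat M w f.

(** Canonical-model argument. Maximal consistent sets are normal worlds; [G] sees [D]
    along [phi] when [phi ∈ D] and [D] contains every [psi] with [phi > psi ∈ G]. A term
    [t] relates [G] only to itself and to the non-normal worlds whose valuation contains
    [{psi | t:psi ∈ G}]; since non-normal worlds may force anything, this makes
    [t:psi] true at [G] exactly when [t:psi ∈ G], with the reflexive step supplied by
    (A8). The remaining axioms and [CS] give the frame conditions; condition (7) holds
    trivially in this model. *)

From Stdlib Require Import List Bool Cantor Classical Lia.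
Import ListNotations.

Scheme tm_fm_ind := Induction for tm Sort Prop
with fm_tm_ind := Induction for fm Sort Prop.

Definition pair_code (a b : nat) : nat := Cantor.to_nat (a, b).

Lemma pair_code_inj a b c d : pair_code a b = pair_code c d -> a = c /\ b = d.
Proof.
  unfold pair_code; intro H. apply (f_equal Cantor.of_nat) in H.
  rewrite !Cantor.cancel_of_to in H. injection H; auto.
Qed.

Fixpoint tm_code (t : tm) : nat :=
  match t with
  | TConst c => pair_code 0 c
  | TVar x => pair_code 1 x
  | TApp a b => pair_code 2 (pair_code (tm_code a) (tm_code b))
  | TSum a b => pair_code 3 (pair_code (tm_code a) (tm_code b))
  | TBang a => pair_code 4 (tm_code a)
  | TPair a f => pair_code 5 (pair_code (tm_code a) (fm_code f))
  end
with fm_code (f : fm) : nat :=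
  match f with
  | FAtom p => pair_code 0 p
  | FNeg a => pair_code 1 (fm_code a)
  | FAnd a b => pair_code 2 (pair_code (fm_code a) (fm_code b))
  | FImp a b => pair_code 3 (pair_code (fm_code a) (fm_code b))
  | FCond a b => pair_code 4 (pair_code (fm_code a) (fm_code b))
  | FJust t a => pair_code 5 (pair_code (tm_code t) (fm_code a))
  end.

Lemma fm_code_inj f f' : fm_code f = fm_code f' -> f = f'.
Proof.
  revert f'.
  apply (fm_tm_ind (fun t => forall t', tm_code t = tm_code t' -> t = t')
                   (fun f => forall f', fm_code f = fm_code f' -> f = f'));
    intros; match goal with |- _ = ?x => destruct x end; simpl in *;
    repeat match goal with
           | H : pair_code _ _ = pair_code _ _ |- _ => apply pair_code_inj in H; destruct H
           end;
    try discriminate;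
    repeat match goal with
           | IH : forall _, ?code _ = _ -> _ = _, E : ?code _ = _ |- _ => apply IH in E
           end;
    subst; reflexivity.
Qed.

Definition bot : fm := FAnd (FAtom 0) (FNeg (FAtom 0)).

Fixpoint imps (l : list fm) (f : fm) : fm :=
  match l with [] => f | h :: r => FImp h (imps r f) end.

Lemma beval_imps v l f :
  beval v (imps l f) = negb (forallb (beval v) l) || beval v f.
Proof.
  induction l as [|h l IH]; simpl; [reflexivity|].
  rewrite IH. destruct (beval v h); reflexivity.
Qed.

Lemma beval_bigconj v g l : beval v (bigconj g l) = forallb (beval v) (g :: l).
Proof.
  revert g; induction l as [|h l IH]; intros g; simpl.
  - destruct (beval v g); reflexivity.
  - rewrite IH. reflexivity.
Qed.

Ltac boolean_taut :=
  intros v; simpl; rewrite ?beval_imps, ?beval_bigconj in *; simpl in *;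
  repeat match goal with
         | |- context [beval v ?a] => destruct (beval v a)
         | |- context [forallb (beval v) ?l] => destruct (forallb (beval v) l)
         | |- context [v ?x] => destruct (v x)
         end;
  simpl; intuition congruence.

Definition set_add (D : fm -> Prop) (e : fm) : fm -> Prop := fun g => D g \/ g = e.

Section Completeness.

Variable CS : const -> fm -> Prop.

Lemma prov_imps_mp ps c :
  prov CS (imps ps c) -> (forall p, In p ps -> prov CS p) -> prov CS c.
Proof.
  induction ps as [|p ps IH]; simpl; intros H Hps; [exact H|].
  apply IH; [apply (PMP CS p); auto | auto].
Qed.

Lemma prov_taut ps c :
  (forall v, forallb (beval v) ps = true -> beval v c = true) ->
  (forall p, In p ps -> prov CS p) -> prov CS c.
Proof.
  intros Hc Hps. apply (prov_imps_mp ps); auto.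
  apply PAx, A1. intro v. rewrite beval_imps.
  destruct (forallb (beval v) ps) eqn:E; simpl; auto.
Qed.

Definition dv (D : fm -> Prop) (f : fm) : Prop :=
  exists l, (forall h, In h l -> D h) /\ prov CS (imps l f).

Lemma dv_prov D f : prov CS f -> dv D f.
Proof. intro H. exists []. simpl. tauto. Qed.

Lemma dv_in (D : fm -> Prop) f : D f -> dv D f.
Proof.
  intro H. exists [f]. split; [intros h [<-|[]]; exact H|].
  apply PAx, A1. boolean_taut.
Qed.

Lemma dv_mono (D D' : fm -> Prop) f : (forall g, D g -> D' g) -> dv D f -> dv D' f.
Proof. intros H [l [Hl Hp]]. exists l. auto. Qed.

Lemma imps_weaken l1 l2 f :
  (forall h, In h l1 -> In h l2) -> prov CS (imps l1 f) -> prov CS (imps l2 f).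
Proof.
  intros Hsub H. apply (prov_taut [imps l1 f]); [|intros p [<-|[]]; exact H].
  intro v. simpl. rewrite !beval_imps, andb_true_r.
  destruct (forallb (beval v) l2) eqn:E2; [|reflexivity]. simpl.
  rewrite forallb_forall in E2.
  assert (E1 : forallb (beval v) l1 = true) by (apply forallb_forall; auto).
  rewrite E1. exact (fun H => H).
Qed.

Lemma dv_common D ps : (forall p, In p ps -> dv D p) ->
  exists l, (forall h, In h l -> D h) /\ forall p, In p ps -> prov CS (imps l p).
Proof.
  induction ps as [|q ps IH]; intros H.
  - exists []. simpl. tauto.
  - destruct IH as [l [Hl Hps]]; [intros; apply H; simpl; auto|].
    destruct (H q (or_introl eq_refl)) as [lq [Hlq Hq]].
    exists (lq ++ l). split.
    + intros h Hh. apply in_app_or in Hh. destruct Hh; auto.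
    + intros p [<-|Hp]; [eapply imps_weaken, Hq|eapply imps_weaken, Hps, Hp];
        intros; apply in_or_app; auto.
Qed.

Lemma dv_taut D ps c :
  (forall v, forallb (beval v) ps = true -> beval v c = true) ->
  (forall p, In p ps -> dv D p) -> dv D c.
Proof.
  intros Hc Hps. destruct (dv_common D ps Hps) as [l [Hl Hl_ps]].
  exists l. split; [exact Hl|].
  apply (prov_taut (map (imps l) ps)).
  - intros v Hv. rewrite beval_imps.
    destruct (forallb (beval v) l) eqn:E; [|reflexivity]. apply Hc.
    apply forallb_forall. intros p Hp.
    rewrite forallb_forall in Hv. specialize (Hv _ (in_map (imps l) _ _ Hp)).
    rewrite beval_imps, E in Hv. exact Hv.
  - intros p Hp. apply in_map_iff in Hp. destruct Hp as [q [<- Hq]]. auto.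
Qed.

Lemma dv_taut1 D a c :
  (forall v, beval v a = true -> beval v c = true) -> dv D a -> dv D c.
Proof.
  intros Hc Ha. apply (dv_taut D [a]); [|intros p [<-|[]]; exact Ha].
  intro v. simpl. rewrite andb_true_r. apply Hc.
Qed.

Lemma dv_taut2 D a b c :
  (forall v, beval v a = true -> beval v b = true -> beval v c = true) ->
  dv D a -> dv D b -> dv D c.
Proof.
  intros Hc Ha Hb. apply (dv_taut D [a; b]); [|intros p [<-|[<-|[]]]; assumption].
  intro v. simpl. rewrite andb_true_r. intro H.
  apply andb_true_iff in H. destruct H. auto.
Qed.

Lemma dv_imp_intro D e f : dv (set_add D e) f -> dv D (FImp e f).
Proof.
  intros [l [Hl Hp]]. revert f Hp.
  induction l as [|h l IH]; intros f Hp.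
  - apply (dv_taut1 D f); [boolean_taut|]. apply dv_prov. exact Hp.
  - assert (Hswap : prov CS (imps l (FImp h f))).
    { apply (prov_taut [imps (h :: l) f]); [boolean_taut|].
      intros p [<-|[]]. exact Hp. }
    specialize (IH (fun g Hg => Hl g (or_intror Hg)) _ Hswap).
    destruct (Hl h (or_introl eq_refl)) as [Hh| ->].
    + apply (dv_taut2 D h (FImp e (FImp h f))); [boolean_taut|apply dv_in; exact Hh|exact IH].
    + apply (dv_taut1 D (FImp e (FImp e f))); [boolean_taut|exact IH].
Qed.

Definition consis (D : fm -> Prop) : Prop := ~ dv D bot.

Definition mcs (G : fm -> Prop) : Prop := consis G /\ forall f, G f \/ G (FNeg f).

Lemma inconsis_add_both C g :
  ~ consis (set_add C g) -> ~ consis (set_add C (FNeg g)) -> ~ consis C.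
Proof.
  intros Hg Hng HC. apply NNPP in Hg. apply NNPP in Hng.
  apply dv_imp_intro in Hg. apply dv_imp_intro in Hng.
  apply HC. apply (dv_taut2 C (FImp g bot) (FImp (FNeg g) bot)); [boolean_taut|assumption|assumption].
Qed.

Section MaximalConsistent.

Variable G : fm -> Prop.
Hypothesis HG : mcs G.

Lemma mcs_dv f : dv G f -> G f.
Proof.
  intro Hf. destruct (proj2 HG f) as [H|H]; [exact H|].
  exfalso. apply (proj1 HG). apply (dv_taut2 G f (FNeg f)); [boolean_taut|exact Hf|apply dv_in, H].
Qed.

Lemma mcs_prov f : prov CS f -> G f.
Proof. intro H. apply mcs_dv, dv_prov, H. Qed.

Lemma mcs_neg a : G (FNeg a) <-> ~ G a.
Proof.
  split.
  - intros Hn Ha. apply (proj1 HG).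
    apply (dv_taut2 G a (FNeg a)); [boolean_taut|apply dv_in, Ha|apply dv_in, Hn].
  - intro Ha. destruct (proj2 HG a); tauto.
Qed.

Lemma mcs_and a b : G (FAnd a b) <-> G a /\ G b.
Proof.
  split.
  - intro H. split; apply mcs_dv, (dv_taut1 G (FAnd a b)); try boolean_taut; apply dv_in, H.
  - intros [Ha Hb]. apply mcs_dv, (dv_taut2 G a b); [boolean_taut|apply dv_in, Ha|apply dv_in, Hb].
Qed.

Lemma mcs_imp a b : G (FImp a b) <-> (G a -> G b).
Proof.
  split.
  - intros H Ha. apply mcs_dv, (dv_taut2 G a (FImp a b)); [boolean_taut|apply dv_in, Ha|apply dv_in, H].
  - intro H. destruct (proj2 HG a) as [Ha|Ha].
    + apply mcs_dv, (dv_taut1 G b); [boolean_taut|apply dv_in; auto].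
    + apply mcs_dv, (dv_taut1 G (FNeg a)); [boolean_taut|apply dv_in, Ha].
Qed.

Lemma mcs_mp a b : G (FImp a b) -> G a -> G b.
Proof. intro H. apply mcs_imp, H. Qed.

Lemma mcs_axiom_mp a b : axiom (FImp a b) -> G a -> G b.
Proof. intro H. apply mcs_mp, mcs_prov, PAx, H. Qed.

Lemma mcs_cond_mp a b : G (FCond a b) -> G a -> G b.
Proof.
  intro H. apply mcs_mp. apply (mcs_axiom_mp (FCond a b)); [apply A4|exact H].
Qed.

Lemma mcs_cond_axiom_mp a b : axiom (FCond a b) -> G a -> G b.
Proof. intro H. apply mcs_cond_mp, mcs_prov, PAx, H. Qed.

Lemma mcs_cond_imps a l g :
  (forall x, In x l -> G (FCond a x)) -> G (FCond a (imps l g)) -> G (FCond a g).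
Proof.
  revert g. induction l as [|x l IH]; simpl; intros g Hl H; [exact H|].
  apply IH; [auto|].
  apply (mcs_mp (FCond a x)); [|auto].
  apply (mcs_axiom_mp (FCond a (FImp x (imps l g)))); [apply A2|exact H].
Qed.

End MaximalConsistent.

Fixpoint lindenbaum_chain (D : fm -> Prop) (n : nat) : fm -> Prop :=
  match n with
  | 0 => D
  | S n =>
      let C := lindenbaum_chain D n in
      fun h => C h \/ exists g, fm_code g = n /\
        ((consis (set_add C g) /\ h = g) \/ (~ consis (set_add C g) /\ h = FNeg g))
  end.

Lemma lindenbaum_chain_step D g h :
  let C := lindenbaum_chain D (fm_code g) in
  lindenbaum_chain D (S (fm_code g)) h ->
  (consis (set_add C g) -> set_add C g h) /\
  (~ consis (set_add C g) -> set_add C (FNeg g) h).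
Proof.
  intros C [Hh|[g' [Hcode Hh]]]; unfold set_add; [tauto|].
  apply fm_code_inj in Hcode. subst g'. tauto.
Qed.

Lemma lindenbaum_chain_consis D n : consis D -> consis (lindenbaum_chain D n).
Proof.
  intro HD. induction n as [|n IH]; [exact HD|].
  set (C := lindenbaum_chain D n) in *.
  destruct (classic (exists g, fm_code g = n)) as [[g <-]|Hnone].
  - pose proof (lindenbaum_chain_step D g) as Hstep. simpl in Hstep.
    intro Hbot. destruct (classic (consis (set_add C g))) as [Hg|Hg].
    + apply Hg. revert Hbot. apply dv_mono. intros h Hh. apply (Hstep h Hh), Hg.
    + apply (inconsis_add_both C g Hg); [|exact IH].
      intro Hng. apply Hng. revert Hbot. apply dv_mono. intros h Hh. apply (Hstep h Hh), Hg.
  - intro Hbot. apply IH. revert Hbot. apply dv_mono.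
    intros h [Hh|[g [Hg _]]]; [exact Hh|exfalso; eauto].
Qed.

Lemma lindenbaum_chain_mono D n m g :
  n <= m -> lindenbaum_chain D n g -> lindenbaum_chain D m g.
Proof. induction 1; simpl; auto. Qed.

Lemma lindenbaum (D : fm -> Prop) :
  consis D -> exists G, mcs G /\ forall g, D g -> G g.
Proof.
  intro HD. exists (fun g => exists n, lindenbaum_chain D n g).
  split; [split|intros g Hg; exists 0; exact Hg].
  - intros [l [Hl Hp]].
    assert (Hbound : exists N, forall h, In h l -> lindenbaum_chain D N h).
    { clear Hp. induction l as [|a l IH].
      - exists 0. simpl. tauto.
      - destruct IH as [N HN]; [intros; apply Hl; simpl; auto|].
        destruct (Hl a (or_introl eq_refl)) as [M HM].
        exists (max N M). intros h [<-|Hh]; eapply lindenbaum_chain_mono;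
          [| exact HM | | exact (HN h Hh)]; lia. }
    destruct Hbound as [N HN].
    apply (lindenbaum_chain_consis D N HD). exists l. auto.
  - intro f.
    destruct (classic (consis (set_add (lindenbaum_chain D (fm_code f)) f))) as [Hf|Hf];
      [left|right]; exists (S (fm_code f)); right; exists f; auto.
Qed.

Lemma mcs_cond_witness G a b : mcs G -> ~ G (FCond a b) ->
  exists D, mcs D /\ D a /\ ~ D b /\ forall x, G (FCond a x) -> D x.
Proof.
  intros HG Hab.
  set (D0 := set_add (set_add (fun g => G (FCond a g)) a) (FNeg b)).
  assert (HD0 : consis D0).
  { intro Hbot. apply dv_imp_intro, dv_imp_intro in Hbot.
    apply (dv_taut1 _ _ (FImp a b)) in Hbot; [|boolean_taut].
    destruct Hbot as [l [Hl Hp]]. apply Hab.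
    apply (mcs_cond_imps G HG a [a]).
    - intros x [<-|[]]. apply mcs_prov; [exact HG|]. apply PAx, A3.
    - apply (mcs_cond_imps G HG a l); [exact Hl|]. apply mcs_prov; [exact HG|]. apply PRCN, Hp. }
  destruct (lindenbaum D0 HD0) as [D [HD HD0D]].
  exists D. split; [exact HD|]. split; [|split].
  - apply HD0D. left. right. reflexivity.
  - apply (mcs_neg D HD). apply HD0D. right. reflexivity.
  - intros x Hx. apply HD0D. left. left. exact Hx.
Qed.

(* Normal worlds are the maximal consistent sets [inl G]; the non-normal worlds
   [inr U] force exactly the formulas in [U]. *)
Definition canonical_model : model := {|
  W := (fm -> Prop) + (fm -> Prop);
  WN := fun w => match w with inl G => mcs G | inr _ => False end;
  RF := fun f w v =>
    match w, v with
    | inl G, inl D => mcs G /\ mcs D /\ D f /\ forall x, G (FCond f x) -> D x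
    | _, _ => False
    end;
  RT := fun t w v =>
    match w, v with
    | inl G, inl D => G = D
    | inl G, inr U => forall x, G (FJust t x) -> U x
    | inr _, _ => False
    end;
  Vp := fun w p => match w with inl G => G (FAtom p) | inr _ => False end;
  Vf := fun w f => match w with inl _ => False | inr U => U f end |}.

Lemma sat_non_normal U f : sat canonical_model (inr U) f <-> U f.
Proof. destruct f; simpl; tauto. Qed.

Lemma truth_lemma f : forall G, mcs G -> (sat canonical_model (inl G) f <-> G f).
Proof.
  induction f as [p|a IH|a IHa b IHb|a IHa b IHb|a IHa b IHb|t a IH];
    intros G HG; simpl;
    (assert (Hnormal : forall X : Prop, (mcs G /\ X) \/ (~ mcs G /\ False) <-> X) by tauto);
    rewrite Hnormal.
  - reflexivity.
  - rewrite IH by exact HG. symmetry. apply mcs_neg, HG.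
  - rewrite IHa, IHb by exact HG. symmetry. apply mcs_and, HG.
  - rewrite IHa, IHb by exact HG. symmetry. apply mcs_imp, HG.
  - split.
    + intro H. apply NNPP. intro Hab.
      destruct (mcs_cond_witness G a b HG Hab) as [D [HD [Ha [Hb HGD]]]].
      apply Hb, (IHb D HD), (H (inl D)). simpl. auto.
    + intros H [D|U]; simpl; [|tauto].
      intros [_ [HD [_ HGD]]]. apply (IHb D HD), HGD, H.
  - split.
    + intro H. apply (sat_non_normal (fun x => G (FJust t x))), H. simpl. auto.
    + intros H [D|U]; simpl.
      * intros <-. apply (IH G HG). apply (mcs_cond_axiom_mp G HG (FJust t a)); [apply A8|exact H].
      * intro HS. apply sat_non_normal, HS, H.
Qed.

Lemma canonical_just G t a : mcs G -> G (FJust t a) ->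
  forall v, RT canonical_model t (inl G) v -> sat canonical_model v a.
Proof.
  intros HG H. apply (truth_lemma _ G HG) in H.
  destruct H as [[_ H]|[H _]]; [exact H|contradiction].
Qed.

Lemma canonical_LPC_model G : mcs G -> LPC_model CS canonical_model.
Proof.
  intro HG0. split; [exists (inl G); exact HG0|]. split.
  { intros f [w|w] [v|v]; simpl; tauto. }
  intros [G'|U] HG; simpl in HG; [clear G HG0; rename G' into G|contradiction].
  split; [|split; [|split; [|split; [|split; [|split; [|split]]]]]].
  - intros f [D|U]; simpl; [|tauto]. intros [_ [HD [Hf _]]]. apply truth_lemma; auto.
  - intros f Hf. apply (truth_lemma _ G HG) in Hf. simpl.
    do 3 (split; [assumption|]). intros x Hx. exact (mcs_cond_mp G HG f x Hx Hf).
  - intros c f Hc. apply canonical_just; [exact HG|]. apply mcs_prov, PCS, Hc. exact HG.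
  - intros s t [D|U]; simpl; [intros <-; auto|].
    intro H. split; intros x Hx; apply H.
    + apply (mcs_cond_axiom_mp G HG (FJust s x)); [apply A6|exact Hx].
    + apply (mcs_cond_axiom_mp G HG (FJust t x)); [apply A7|exact Hx].
  - intros s t v Hv a b Hst. apply (truth_lemma _ G HG) in Hst.
    apply (canonical_just G (TApp s t)); [exact HG| |exact Hv].
    apply (mcs_cond_axiom_mp G HG (FAnd (FJust s (FCond a b)) (FJust t a))); [apply A5|exact Hst].
  - reflexivity.
  - intros t [D|U] u; simpl; [intros <-; auto|contradiction].
  - intros v a b t Hb Hv. apply (truth_lemma _ G HG) in Hb.
    apply (canonical_just G (TPair t a)); [exact HG| |exact Hv].
    apply (mcs_axiom_mp G HG (FJust t b)); [apply A10|exact Hb].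
Qed.

Lemma deriv_of_dv T f : dv T f -> deriv CS T f.
Proof.
  intros [[|g l] [Hl Hp]]; [left; exact Hp|right].
  exists g, l. split; [apply Hl; left; reflexivity|]. split; [intros h Hh; apply Hl; right; exact Hh|].
  apply (prov_taut [imps (g :: l) f]); [boolean_taut|intros p [<-|[]]; exact Hp].
Qed.

Lemma consis_add_neg T f : ~ deriv CS T f -> consis (set_add T (FNeg f)).
Proof.
  intros Hnd Hbot. apply Hnd, deriv_of_dv.
  apply (dv_taut1 T (FImp (FNeg f) bot)); [boolean_taut|apply dv_imp_intro, Hbot].
Qed.

End Completeness.

Theorem mainTheorem11 (CS : const -> fm -> Prop) (HCS : constant_spec CS)
  (T : fm -> Prop) (f : fm) :
  entails CS T f -> deriv CS T f.
Proof.
  intro Hent. apply NNPP. intro Hnd.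
  destruct (lindenbaum CS _ (consis_add_neg CS T f Hnd)) as [G [HG HTG]].
  assert (Hf : sat (canonical_model CS) (inl G) f).
  { apply (Hent _ (canonical_LPC_model CS G HG) (inl G) HG).
    intros g Hg. apply (truth_lemma CS g G HG), HTG. left. exact Hg. }
  apply (truth_lemma CS f G HG) in Hf.
  apply (mcs_neg CS G HG f); [apply HTG; right; reflexivity|exact Hf].
Qed.
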